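(* Let $f:\mathbb{R}^p\to\mathbb{R}$ be convex and differentiable with Lipschitz gradient, and for each $j\in[p]=\{1,\dots,p\}$ let $g_j:\mathbb{R}\to\mathbb{R}\cup\{+\infty\}$ be proper, closed and convex. Set $g(x)=\sum_{j=1}^p g_j(x_j)$ and $\Phi=f+g$. Assume $\arg\min_{x\in\mathbb{R}^p}\Phi(x)\neq\emptyset$, and that every minimizer $x^\star$ of $\Phi$ satisfies the non-degeneracy condition $-\nabla f(x^\star)\in\operatorname{ri}(\partial g(x^\star))$. Fix a minimizer $x^\star$ and let $\mathcal{S}=\mathcal{S}_{x^\star}$ be its generalized support. Assume that for all $j\in\mathcal{S}$, $g_j$ is $\mathcal{C}^2$ on a neighbourhood of $x^\star_j$, and that $f$ is $\mathcal{C}^2$ on a neighbourhood of $x^\star$. Let $(x^{(k)})_{k\ge 0}$ be the sequence generated by cyclic proximal coordinate descent with step sizes $0<\gamma_j\le 1/L_j$, and assume $x^{(k)}\to x^\star$. Then there exists $K>0$ such that for all $k\ge K$, $x^{(k)}_{\mathcal{S}^c}=x^\star_{\mathcal{S}^c}$.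
   Context: $\operatorname{ri}$ denotes relative interior and $\partial$ the convex subdifferential. $L_j$ is the coordinatewise Lipschitz constant of $\nabla_j f$: $|\nabla_j f(x+he_j)-\nabla_j f(x)|\le L_j|h|$ for all $x\in\mathbb{R}^p,h\in\mathbb{R}$. The generalized support of $x$ is $\mathcal{S}_x=\{j\in[p]:\partial g_j(x_j)\text{ is a singleton}\}$, and $\mathcal{S}^c=[p]\setminus\mathcal{S}$. For a convex $h$ and $\gamma>0$, $\operatorname{prox}_{\gamma h}(v)=\arg\min_y \frac{1}{2\gamma}\|v-y\|^2+h(y)$. Cyclic proximal coordinate descent: given $x^{(0)}\in\mathbb{R}^p$, for each $k\ge0$ set $x^{(0,k)}=x^{(k)}$; for $j=1,\dots,p$, set $x^{(j,k)}=x^{(j-1,k)}$ and then replace its $j$-th coordinate by $\operatorname{prox}_{\gamma_j g_j}\big(x^{(j-1,k)}_j-\gamma_j\nabla_j f(x^{(j-1,k)})\big)$; finally $x^{(k+1)}=x^{(p,k)}$. *)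

From HB Require Import structures.
From mathcomp Require Import all_boot all_order all_algebra.
From mathcomp Require Import all_classical all_reals all_analysis.
Set Implicit Arguments. Unset Strict Implicit. Unset Printing Implicit Defensive.
Import Order.TTheory GRing.Theory Num.Theory.
Import numFieldNormedType.Exports.
Local Open Scope classical_set_scope.
Local Open Scope ring_scope.

Section Defs.
Variables (R : realType) (p : nat).
Local Notation vec := 'rV[R]_p.

Definition ej (j : 'I_p) : vec := delta_mx 0 j.

Definition dotp (u v : vec) : R := \sum_(i < p) u 0 i * v 0 i.

Definition partial (f : vec -> R) (j : 'I_p) (x : vec) : R := 'D_(ej j) f x.

Definition grad (f : vec -> R) (x : vec) : vec := \row_j partial f j x.

Definition convex_fun (f : vec -> R) :=
  forall (x y : vec) (t : R), 0 <= t <= 1 ->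
    f (t *: x + (1 - t) *: y) <= t * f x + (1 - t) * f y.

Definition differentiable_everywhere (f : vec -> R) :=
  forall x : vec, differentiable f x.

Definition lipschitz_gradient (f : vec -> R) :=
  exists L : R, forall x y : vec, `|grad f x - grad f y| <= L * `|x - y|.

Definition coord_lipschitz (f : vec -> R) (j : 'I_p) (Lj : R) :=
  forall (x : vec) (h : R),
    `|partial f j (x + h *: ej j) - partial f j x| <= Lj * `|h|.

Definition C2_near (f : vec -> R) (x : vec) :=
  exists2 eps : R, 0 < eps &
    forall y : vec, ball x eps y ->
      (forall i : 'I_p, derivable f y (ej i) /\ {for y, continuous (partial f i)}) /\
      (forall i j : 'I_p, derivable (partial f i) y (ej j) /\
                          {for y, continuous (partial (partial f i) j)}).

Definition subdiff (h : vec -> \bar R) (x : vec) : set vec :=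
  [set v | h x \is a fin_num /\
           forall y : vec, (h x + (dotp v (y - x))%:E <= h y)%E].

Definition aff_hull (C : set vec) : set vec :=
  [set z | exists (n : nat) (c : 'I_n -> vec) (l : 'I_n -> R),
      (forall i, C (c i)) /\ \sum_(i < n) l i = 1 /\ z = \sum_(i < n) l i *: c i].

Definition rel_interior (C : set vec) : set vec :=
  [set x | C x /\ exists2 eps : R, 0 < eps &
             forall y, ball x eps y -> aff_hull C y -> C y].

End Defs.

Section Defs1.
Variable (R : realType).

Definition convex_ext (h : R -> \bar R) :=
  forall (x y t : R), (0 < t < 1)%R ->
    (h ((t * x + (1 - t) * y)%R) <= t%:E * h x + (1 - t)%:E * h y)%E.

Definition proper_ext (h : R -> \bar R) :=
  (forall x, h x != -oo%E) /\ exists x, h x \is a fin_num.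

Definition closed_ext (h : R -> \bar R) := lower_semicontinuous h.

Definition subdiff1 (h : R -> \bar R) (x : R) : set R :=
  [set v | h x \is a fin_num /\ forall y : R, (h x + (v * (y - x))%:E <= h y)%E].

Definition C2_near1 (h : R -> \bar R) (x : R) :=
  exists2 eps : R, 0 < eps & exists u : R -> R,
    forall y : R, `|y - x| < eps ->
      h y = (u y)%:E /\ derivable u y 1 /\ derivable (derive1 u) y 1 /\
      {for y, continuous (derive1n 2 u)}.

Definition is_prox (gam : R) (h : R -> \bar R) (v y : R) :=
  forall z : R, (((v - y) ^+ 2 / (2 * gam))%:E + h y <=
                 ((v - z) ^+ 2 / (2 * gam))%:E + h z)%E.

End Defs1.

Definition sep_sum (R : realType) (p : nat) (g : 'I_p -> R -> \bar R)
  (x : 'rV[R]_p) : \bar R := (\sum_(j < p) g j (x 0%R j))%E.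

Definition Phi (R : realType) (p : nat) (f : 'rV[R]_p -> R)
  (g : 'I_p -> R -> \bar R) (x : 'rV[R]_p) : \bar R :=
  ((f x)%:E + sep_sum g x)%E.

Definition is_minimizer (R : realType) (p : nat) (F : 'rV[R]_p -> \bar R)
  (x : 'rV[R]_p) := forall y, (F x <= F y)%E.

Definition gen_support (R : realType) (p : nat) (g : 'I_p -> R -> \bar R)
  (x : 'rV[R]_p) (j : 'I_p) : Prop :=
  exists v : R, subdiff1 (g j) (x 0 j) = [set v].

(* cyclic proximal coordinate descent: z k j = x^{(j,k)} for j = 0..p *)
Definition cyclic_prox_cd (R : realType) (p : nat) (f : 'rV[R]_p -> R)
  (g : 'I_p -> R -> \bar R) (gam : 'I_p -> R)
  (x : nat -> 'rV[R]_p) (z : nat -> nat -> 'rV[R]_p) :=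
  forall k : nat,
    z k 0%N = x k /\
    (forall j : 'I_p,
       (forall i : 'I_p, i != j -> z k j.+1 0 i = z k j 0 i) /\
       is_prox (gam j) (g j)
         (z k j 0 j - gam j * partial f j (z k j)) (z k j.+1 0 j)) /\
    x k.+1 = z k p.

(* For a coordinate j outside the generalized support, the subdifferential
   of g_j at xstar_j is a nondegenerate interval, and nondegeneracy places
   -grad_j f(xstar) in its interior, at distance eps > 0 from its ends.  Since
   the inner iterates x^(j,k) converge to xstar, eventually the forward point
   v = x^(j,k)_j - gam_j grad_j f(x^(j,k)) satisfies
   |(v - xstar_j) / gam_j + grad_j f(xstar)| < eps, so (v - xstar_j) / gam_j
   is a subgradient of g_j at xstar_j, and the optimality condition of the
   prox forces the prox step to return exactly xstar_j. *)
From HB Require Import structures.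
From mathcomp Require Import all_boot all_order all_algebra.
From mathcomp Require Import all_classical all_reals all_analysis.
From mathcomp Require Import ring lra.
Set Implicit Arguments. Unset Strict Implicit. Unset Printing Implicit Defensive.
Import Order.TTheory GRing.Theory Num.Theory.
Import numFieldNormedType.Exports.
Local Open Scope classical_set_scope.
Local Open Scope ring_scope.

Section Prox.
Variable R : realType.

Lemma is_prox_eq_of_subdiff1 (gam : R) (h : R -> \bar R) (v y a : R) :
  0 < gam -> is_prox gam h v y -> subdiff1 h a ((v - a) / gam) -> y = a.
Proof.
move=> gam0 Hprox [ha_fin Hsub].
have := Hprox a; have := Hsub y; rewrite -(fineK ha_fin).
case: (h y) => [b| |] //=; rewrite -!EFinD !lee_fin => Hsub_y Hprox_a.
have sq_gap : (v - y) ^+ 2 / (2 * gam) + (v - a) / gam * (y - a)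
                - (v - a) ^+ 2 / (2 * gam) = (y - a) ^+ 2 / (2 * gam).
  by field; rewrite gt_eqF.
have sq_le0 : (y - a) ^+ 2 / (2 * gam) <= 0 by rewrite -sq_gap; lra.
have sq_le : (y - a) ^+ 2 <= 0.
  by move: sq_le0; rewrite pmulr_lle0 // invr_gt0 mulr_gt0.
by apply/eqP; rewrite -subr_eq0 -sqrf_eq0 eq_le sq_le sqr_ge0.
Qed.

Lemma prox_grad_step_eq (gam : R) (h : R -> \bar R) (a u eps y d v : R) :
  0 < gam -> (forall r, `|r - u| < eps -> subdiff1 h a r) ->
  `|y - a| / gam + `|d + u| < eps -> is_prox gam h (y - gam * d) v -> v = a.
Proof.
move=> gam0 Hball Hclose Hprox; apply: (is_prox_eq_of_subdiff1 gam0 Hprox).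
apply: Hball.
have -> : (y - gam * d - a) / gam - u = (y - a) / gam - (d + u).
  by field; rewrite gt_eqF.
apply: le_lt_trans (ler_normB _ _) _.
by rewrite normrM normfV (gtr0_norm gam0).
Qed.

End Prox.

Section SeparableSubdifferential.
Variables (R : realType) (p : nat).
Local Notation vec := 'rV[R]_p.

Lemma rV_coord_le_norm (M : vec) (i : 'I_p) : `|M 0 i| <= `|M|.
Proof.
rewrite [leRHS]/Num.Def.normr /= mx_normrE; apply/bigmax_geP; right => /=.
by exists (0, i).
Qed.

Lemma rV_norm_lt (M : vec) (e : R) :
  0 < e -> (forall i, `|M 0 i| < e) -> `|M| < e.
Proof.
move=> e0 He; rewrite [ltLHS]/Num.Def.normr /= mx_normrE.
by apply: bigmax_lt => // -[a i] _ /=; rewrite (ord1 a); exact: He.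
Qed.

Definition set_coord (w : vec) (j : 'I_p) (r : R) : vec :=
  \row_i (if i == j then r else w 0 i).

Lemma set_coordE (w : vec) j r i :
  set_coord w j r 0 i = if i == j then r else w 0 i.
Proof. by rewrite mxE. Qed.

Lemma subdiff_sep_sumE (g : 'I_p -> R -> \bar R) (xm u : vec) :
  subdiff (sep_sum g) xm u <-> forall i, subdiff1 (g i) (xm 0 i) (u 0 i).
Proof.
split=> [[sum_fin Hsub] i|Hcoord]; last first.
  split; first by apply/sum_fin_numP => i _ _; case: (Hcoord i).
  move=> y; rewrite /sep_sum /dotp -sumEFin -big_split /=.
  by apply: lee_sum => i _; rewrite !mxE; case: (Hcoord i) => _; apply.
have coord_fin l : g l (xm 0 l) \is a fin_num by move/sum_fin_numP: sum_fin; apply.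
split=> [//|y0]; have := Hsub (set_coord xm i y0).
have -> : dotp u (set_coord xm i y0 - xm) = u 0 i * (y0 - xm 0 i).
  rewrite /dotp (bigD1 i) //= big1 => [|l /negbTE li].
    by rewrite !mxE eqxx addr0.
  by rewrite !mxE li subrr mulr0.
have rest_fin : (\sum_(l < p | l != i) g l (xm 0%R l))%E \is a fin_num.
  by apply/sum_fin_numP => l _ _; exact: coord_fin.
rewrite /sep_sum (bigD1 i) //= (bigD1 i (P := xpredT)) //= set_coordE eqxx.
have -> : (\sum_(l < p | l != i) g l (set_coord xm i y0 0%R l) =
           \sum_(l < p | l != i) g l (xm 0%R l))%E.
  by apply: eq_bigr => l /negbTE li; rewrite set_coordE li.
rewrite -(fineK rest_fin) -(fineK (coord_fin i)).
case: (g i y0) => [b||] /=.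
- by rewrite -!EFinD !lee_fin; lra.
- by move=> _; exact: leey.
- by rewrite -!EFinD addNye leeNy_eq.
Qed.

Lemma aff_hull_segment (C : set vec) (u v : vec) (t : R) :
  C u -> C v -> aff_hull C ((1 - t) *: u + t *: v).
Proof.
move=> Cu Cv; exists 2%N, (fun i : 'I_2 => if i == ord0 then u else v),
  (fun i : 'I_2 => if i == ord0 then 1 - t else t).
split; first by move=> i; case: ifP.
by split; rewrite big_ord_recr big_ord1 //= subrK.
Qed.

(* The affine hull of the product of the coordinate subdifferentials contains
   the line through w along e_j as soon as the j-th factor is not a singleton. *)
Lemma rel_interior_subdiff_sep_sum_coord (g : 'I_p -> R -> \bar R)
    (xm w : vec) (j : 'I_p) :
  rel_interior (subdiff (sep_sum g) xm) w -> ~ gen_support g xm j ->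
  exists2 eps : R, 0 < eps &
    forall r, `|r - w 0 j| < eps -> subdiff1 (g j) (xm 0 j) r.
Proof.
move=> [Cw [eps eps0 Hball]] nsupp; exists eps => // r hr.
have Hw := (subdiff_sep_sumE g xm w).1 Cw.
have [s Ss sw] : exists2 s, subdiff1 (g j) (xm 0 j) s & s != w 0 j.
  apply: contrapT => Hn; apply: nsupp; exists (w 0 j).
  apply/seteqP; split => [s Ss|s ->]; last exact: Hw.
  by apply/eqP/negPn/negP => sw; apply: Hn; exists s.
have Cws : subdiff (sep_sum g) xm (set_coord w j s).
  by apply/subdiff_sep_sumE => i; rewrite set_coordE; case: eqP => [->|].
pose t := (r - w 0 j) / (s - w 0 j).
have line : set_coord w j r = (1 - t) *: w + t *: set_coord w j s.
  apply/rowP => i; rewrite !mxE; case: eqP => [->|_]; last by ring.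
  by rewrite /t; field; rewrite subr_eq0.
suff /subdiff_sep_sumE/(_ j) : subdiff (sep_sum g) xm (set_coord w j r).
  by rewrite set_coordE eqxx.
apply: Hball; last by rewrite line; exact: aff_hull_segment.
rewrite -ball_normE /=; apply: rV_norm_lt => // i.
rewrite !mxE; case: eqP => [->|_]; first by rewrite distrC.
by rewrite subrr normr0.
Qed.

Lemma partial_lipschitz (f : vec -> R) (Lg : R) (j : 'I_p) (u v : vec) :
  (forall u v, `|grad f u - grad f v| <= Lg * `|u - v|) ->
  `|partial f j u - partial f j v| <= Lg * `|u - v|.
Proof.
move=> HLg; apply: le_trans (HLg u v).
by have := rV_coord_le_norm (grad f u - grad f v) j; rewrite !mxE.
Qed.

End SeparableSubdifferential.

Section CyclicProxCD.
Variables (R : realType) (p : nat).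
Variables (f : 'rV[R]_p -> R) (g : 'I_p -> R -> \bar R) (gam : 'I_p -> R).
Variables (x : nat -> 'rV[R]_p) (z : nat -> nat -> 'rV[R]_p).
Hypothesis Hcd : cyclic_prox_cd f g gam x z.

Lemma inner_iterateE k m (i : 'I_p) : (m <= p)%N ->
  z k m 0 i = if (i < m)%N then x k.+1 0 i else x k 0 i.
Proof.
have [z0 [Hstep zp]] := Hcd k.
have step_other m' (mp : (m' < p)%N) (i' : 'I_p) : i' != Ordinal mp ->
    z k m'.+1 0 i' = z k m' 0 i'.
  by case: (Hstep (Ordinal mp)) => + _; apply.
have untouched m' : (m' <= p)%N -> (m' <= i)%N -> z k m' 0 i = x k 0 i.
  elim: m' => [|m' IH] mp mi; first by rewrite z0.
  rewrite (step_other m' mp); first by apply: IH; exact: ltnW.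
  by apply/eqP => /(congr1 val) /= ie; rewrite ie ltnn in mi.
have frozen m' : (i < m')%N -> (m' <= p)%N -> z k m' 0 i = z k i.+1 0 i.
  elim: m' => [|m' IH] // im mp.
  have [lt_im|-> //] : (i < m')%N \/ i = m' :> nat.
    by move: im; rewrite ltnS leq_eqVlt => /orP[/eqP|]; [right|left].
  rewrite (step_other m' mp); first by apply: IH => //; exact: ltnW.
  by apply/eqP => /(congr1 val) /= ie; rewrite ie ltnn in lt_im.
move=> mp; case: ifP => im; last by rewrite untouched // leqNgt im.
by rewrite frozen // zp (frozen p).
Qed.

Variable xstar : 'rV[R]_p.
Hypothesis Hx : x @ \oo --> xstar.

Lemma inner_iterate_cvg m : (m <= p)%N -> (fun k => z k m) @ \oo --> xstar.
Proof.
move=> mp; have HxS : (fun k => x k.+1) @ \oo --> xstar by rewrite (cvg_shiftS x).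
apply/cvgrPdist_lt => e e0.
apply: filterS2 ((cvgrPdist_lt _ _).1 Hx e e0) ((cvgrPdist_lt _ _).1 HxS e e0).
move=> k xk xk1; apply: rV_norm_lt => // i; rewrite !mxE inner_iterateE //.
have coord_lt (M : 'rV[R]_p) : `|M| < e -> `|M 0 i| < e.
  exact: le_lt_trans (rV_coord_le_norm M i).
by case: ifP => _; [move: (coord_lt _ xk1)|move: (coord_lt _ xk)]; rewrite !mxE.
Qed.

Lemma eventually_coord_identified (j : 'I_p) (Lg : R) :
  (forall u v, `|grad f u - grad f v| <= Lg * `|u - v|) -> 0 < gam j ->
  rel_interior (subdiff (sep_sum g) xstar) (- grad f xstar) ->
  ~ gen_support g xstar j ->
  \forall k \near \oo, x k.+1 0 j = xstar 0 j.
Proof.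
move=> HLg gam0 Hri nsupp.
have [eps eps0 Heps] := rel_interior_subdiff_sep_sum_coord Hri nsupp.
pose c := (gam j)^-1 + `|Lg|.
have c0 : 0 <= c by rewrite addr_ge0 // invr_ge0 ltW.
have d0 : 0 < eps / (c + 1) by rewrite divr_gt0 // ltr_wpDl.
have zcvg := inner_iterate_cvg (ltnW (ltn_ord j)).
apply: filterS ((cvgrPdist_lt _ _).1 zcvg _ d0) => k zk.
have -> : x k.+1 0 j = z k j.+1 0 j by rewrite inner_iterateE ?ltnSn.
have [_ [/(_ j) [_ Hprox] _]] := Hcd k.
apply: (prox_grad_step_eq gam0 Heps _ Hprox); rewrite !mxE.
set n := `|xstar - z k j| in zk.
have n0 : 0 <= n by exact: normr_ge0.
have coord_close : `|z k j 0 j - xstar 0 j| <= n.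
  by rewrite distrC; have := rV_coord_le_norm (xstar - z k j) j; rewrite !mxE.
have grad_close : `|partial f j (z k j) + - partial f j xstar| <= `|Lg| * n.
  apply: le_trans (partial_lipschitz j _ _ HLg) _.
  by rewrite distrC ler_wpM2r // ler_norm.
have : n * (c + 1) < eps by rewrite -ltr_pdivlMr // ltr_wpDl.
have : `|z k j 0 j - xstar 0 j| / gam j <= n / gam j.
  by rewrite ler_pM2r // invr_gt0.
have expand : n * (c + 1) = n / gam j + `|Lg| * n + n by rewrite /c; ring.
lra.
Qed.

End CyclicProxCD.

Theorem theorem1 (R : realType) (p : nat)
  (f : 'rV[R]_p -> R) (g : 'I_p -> R -> \bar R)
  (L : 'I_p -> R) (gam : 'I_p -> R)
  (x : nat -> 'rV[R]_p) (z : nat -> nat -> 'rV[R]_p) (xstar : 'rV[R]_p) :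
  convex_fun f ->
  differentiable_everywhere f ->
  lipschitz_gradient f ->
  (forall j, proper_ext (g j) /\ closed_ext (g j) /\ convex_ext (g j)) ->
  (exists xm, is_minimizer (Phi f g) xm) ->
  (forall xm, is_minimizer (Phi f g) xm ->
     rel_interior (subdiff (sep_sum g) xm) (- grad f xm)) ->
  is_minimizer (Phi f g) xstar ->
  (forall j, gen_support g xstar j -> C2_near1 (g j) (xstar 0 j)) ->
  C2_near f xstar ->
  (forall j, 0 <= L j /\ coord_lipschitz f j (L j)) ->
  (forall j, 0 < gam j /\ gam j * L j <= 1) ->
  cyclic_prox_cd f g gam x z ->
  x @ \oo --> xstar ->
  exists2 K : nat, (0 < K)%N &
    forall k : nat, (K <= k)%N ->
      forall j : 'I_p, ~ gen_support g xstar j -> x k 0 j = xstar 0 j.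
Proof.
move=> _ _ [Lg HLg] _ _ Hnd Hmin _ _ _ Hgam Hcd Hx.
have Hri := Hnd xstar Hmin.
have : \forall k \near \oo,
    forall j, ~ gen_support g xstar j -> x k.+1 0 j = xstar 0 j.
  apply: filter_forall => j.
  have [supp|nsupp] := pselect (gen_support g xstar j).
    by apply: nearW => k /(_ supp).
  have := eventually_coord_identified Hcd Hx HLg (Hgam j).1 Hri nsupp.
  by apply: filterS => k xk _.
case=> N _ HN; exists N.+1 => // -[|k] // kN; exact: HN.
Qed.
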